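(* Let $N\in\mathbb{N}$ and let $F,G,H$ be positive-semidefinite $N\times N$ Hermitian matrices with $0\preceq H\preceq F$. Consider the semidefinite program \[ \min\ \operatorname{tr}[HX]\quad\text{s.t.}\quad \operatorname{tr}[FX]=1,\quad \operatorname{tr}[GX]=0,\quad X\succeq 0, \] over $N\times N$ Hermitian matrices $X$, and assume it is feasible. Then it is equivalent to the quadratic optimization problem \[ \min\ x^\dagger H x\quad\text{s.t.}\quad x^\dagger F x=1,\quad x\in\ker G,\quad x\perp(\ker F\cap\ker G), \] in the sense that both have the same optimal value and for every optimal $x$ of the quadratic problem, $X=xx^\dagger$ is optimal for the semidefinite program.
   Context: $A\preceq B$ means $B-A$ is positive-semidefinite. For a positive-semidefinite $G$, $x^\dagger Gx=0$ is equivalent to $x\in\ker G$. *)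

(* Complex matrices are modelled as 'M[R[i]]_N with
   R : realType (so R[i] is the field of complex numbers over the reals R). *)
From HB Require Import structures.
From mathcomp Require Import all_boot all_order all_algebra.
From mathcomp Require Import reals.
From mathcomp Require Import complex.
Set Implicit Arguments. Unset Strict Implicit. Unset Printing Implicit Defensive.
Import Order.TTheory GRing.Theory Num.Theory.
Local Open Scope ring_scope.

Section Defs.
Variable C : numClosedFieldType.

Definition adjmx m n (A : 'M[C]_(m, n)) : 'M[C]_(n, m) := (map_mx Num.conj A)^T.

Definition hermitian n (A : 'M[C]_n) : Prop := adjmx A = A.

Definition qform n (A : 'M[C]_n) (x : 'cV[C]_n) : C := (adjmx x *m A *m x) 0 0.

Definition psd n (A : 'M[C]_n) : Prop :=
  hermitian A /\ forall x : 'cV[C]_n, 0 <= qform A x.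

Definition loewner n (A B : 'M[C]_n) : Prop := psd (B - A).

Definition in_ker n (A : 'M[C]_n) (x : 'cV[C]_n) : Prop := A *m x = 0.

Definition sdp_feasible n (F G : 'M[C]_n) (X : 'M[C]_n) : Prop :=
  psd X /\ \tr (F *m X) = 1 /\ \tr (G *m X) = 0.

Definition sdp_optimal n (F G H : 'M[C]_n) (X : 'M[C]_n) : Prop :=
  sdp_feasible F G X /\
  forall Y, sdp_feasible F G Y -> \tr (H *m X) <= \tr (H *m Y).

Definition qp_feasible n (F G : 'M[C]_n) (x : 'cV[C]_n) : Prop :=
  qform F x = 1 /\ in_ker G x /\
  forall y : 'cV[C]_n, in_ker F y -> in_ker G y -> (adjmx y *m x) 0 0 = 0.

Definition qp_optimal n (F G H : 'M[C]_n) (x : 'cV[C]_n) : Prop :=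
  qp_feasible F G x /\
  forall y, qp_feasible F G y -> qform H x <= qform H y.

End Defs.

(* Every feasible X of the SDP is a sum of rank-one terms s s^+ with G s = 0, so
   tr[HX] = sum s^+Hs >= lambda * sum s^+Fs = lambda, where lambda is the optimal
   value of the quadratic problem: normalising s and removing its component in
   ker F cap ker G = ker (F + G), which H annihilates as well since 0 <= H <= F,
   turns s into a feasible point, whence s^+Hs >= lambda s^+Fs.  Conversely x x^+
   is feasible for the SDP with value x^+Hx.  The quadratic problem attains its
   minimum because it is a generalised eigenvalue problem: compress F and H to
   ker G, whiten F by its spectral decomposition, and take an eigenvector of
   least eigenvalue of the resulting Hermitian matrix. *)

From Pilot Require Import Defs.
From HB Require Import structures.
From mathcomp Require Import all_boot all_order all_algebra.
From mathcomp Require Import reals complex.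
Set Implicit Arguments. Unset Strict Implicit. Unset Printing Implicit Defensive.
Import Order.TTheory GRing.Theory Num.Theory.
Local Open Scope ring_scope.
Local Open Scope sesquilinear_scope.

(* Plain [hermitian] would denote the sesquilinear.v qualifier, hence [Defs.hermitian]. *)

Section Adjoint.
Variable C : numClosedFieldType.

Lemma adjmxE m n (A : 'M[C]_(m, n)) i j : adjmx A i j = (A j i)^*.
Proof. by rewrite !mxE. Qed.

Lemma adjmx_trC m n (A : 'M[C]_(m, n)) : adjmx A = A ^t*.
Proof. by rewrite /adjmx map_trmx. Qed.

Lemma adjmxK m n (A : 'M[C]_(m, n)) : adjmx (adjmx A) = A.
Proof. by apply/matrixP=> i j; rewrite !adjmxE conjCK. Qed.

Lemma adjmxM m n p (A : 'M[C]_(m, n)) (B : 'M[C]_(n, p)) :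
  adjmx (A *m B) = adjmx B *m adjmx A.
Proof. by rewrite !adjmx_trC trmx_mul map_mxM. Qed.

Lemma adjmxD m n (A B : 'M[C]_(m, n)) : adjmx (A + B) = adjmx A + adjmx B.
Proof. by rewrite !adjmx_trC linearD map_mxD. Qed.

Lemma adjmxB m n (A B : 'M[C]_(m, n)) : adjmx (A - B) = adjmx A - adjmx B.
Proof. by rewrite !adjmx_trC linearB map_mxB. Qed.

Lemma adjmxZ m n a (A : 'M[C]_(m, n)) : adjmx (a *: A) = a^* *: adjmx A.
Proof. by apply/matrixP=> i j; rewrite !(adjmxE, mxE) rmorphM. Qed.

Lemma adjmx1 n : adjmx (1%:M : 'M[C]_n) = 1%:M.
Proof. by rewrite adjmx_trC trmx1 map_mx1. Qed.

Lemma adjmx_diag n (d : 'rV[C]_n) : adjmx (diag_mx d) = diag_mx (map_mx Num.conj d).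
Proof. by rewrite adjmx_trC tr_diag_mx map_diag_mx. Qed.

Lemma adjmx_delta m n (i : 'I_m) (j : 'I_n) :
  adjmx (delta_mx i j : 'M[C]_(m, n)) = delta_mx j i.
Proof. by rewrite adjmx_trC trmx_delta map_delta_mx. Qed.

End Adjoint.

Lemma diag_mxM (R : pzSemiRingType) n (a b : 'rV[R]_n) :
  diag_mx a *m diag_mx b = diag_mx (\row_i (a 0 i * b 0 i)).
Proof.
apply/matrixP=> i j; rewrite mul_diag_mx !mxE.
by case: eqP => [->|_]; rewrite ?mulr1n ?mulr0n ?mulr0.
Qed.

Lemma real_argmin (C : numDomainType) (I : finType) (f : I -> C) (i0 : I) :
  (forall i, f i \is Num.real) -> exists j, forall i, f j <= f i.
Proof.
move=> fR; suff [j jmin] : exists j, forall i, i \in enum I -> f j <= f i.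
  by exists j => i; apply: jmin; rewrite mem_enum.
elim: (enum I) => [|a s [j IH]]; first by exists i0.
have /orP[le|le] := real_leVge (fR a) (fR j).
  by exists a => i; rewrite inE => /orP[/eqP->//|/IH]; apply: le_trans.
by exists j => i; rewrite inE => /orP[/eqP->//|/IH].
Qed.

Section QuadraticForms.
Variable C : numClosedFieldType.

Lemma qform_mulmx m n (A : 'M[C]_m) (P : 'M[C]_(m, n)) x :
  qform (adjmx P *m A *m P) x = qform A (P *m x).
Proof. by rewrite /qform adjmxM !mulmxA. Qed.

Lemma qformD n (A B : 'M[C]_n) x : qform (A + B) x = qform A x + qform B x.
Proof. by rewrite /qform mulmxDr mulmxDl mxE. Qed.

Lemma qformB n (A B : 'M[C]_n) x : qform (A - B) x = qform A x - qform B x.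
Proof. by rewrite /qform mulmxBr mulmxBl !mxE. Qed.

Lemma qformZl n a (A : 'M[C]_n) x : qform (a *: A) x = a * qform A x.
Proof. by rewrite /qform -scalemxAr -scalemxAl mxE. Qed.

Lemma qformZ n a (A : 'M[C]_n) x : qform A (a *: x) = a^* * a * qform A x.
Proof. by rewrite /qform adjmxZ -2!scalemxAl -scalemxAr !mxE mulrA. Qed.

Lemma qform_ker n (A : 'M[C]_n) x : A *m x = 0 -> qform A x = 0.
Proof. by rewrite /qform -mulmxA => ->; rewrite mulmx0 mxE. Qed.

Lemma qform_eigen n (A : 'M[C]_n) a x : A *m x = a *: x -> qform A x = a * qform 1%:M x.
Proof. by rewrite /qform -mulmxA => ->; rewrite mulmx1 -scalemxAr mxE. Qed.

Lemma qform_sub_ker n (A : 'M[C]_n) x v :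
  Defs.hermitian A -> A *m v = 0 -> qform A (x - v) = qform A x.
Proof.
move=> hA Av; have vA : adjmx v *m A = 0.
  by rewrite -hA -adjmxM Av; apply/matrixP=> i j; rewrite !mxE conjC0.
by rewrite /qform adjmxB mulmxBl vA subr0 mulmxBr -[_ *m A *m v]mulmxA Av mulmx0 subr0.
Qed.

Lemma qform_real n (A : 'M[C]_n) x : Defs.hermitian A -> qform A x \is Num.real.
Proof. by move=> hA; apply/CrealP; rewrite /qform -adjmxE !adjmxM adjmxK hA mulmxA. Qed.

Lemma qform_delta n (A : 'M[C]_n) i : qform A (delta_mx i 0) = A i i.
Proof. by rewrite /qform adjmx_delta -rowE -colE !mxE. Qed.

Lemma qform1E n (x : 'cV[C]_n) : qform 1%:M x = \sum_i `|x i 0| ^+ 2.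
Proof. by rewrite /qform mulmx1 mxE; apply: eq_bigr => i _; rewrite adjmxE normCKC. Qed.

Lemma qform1_ge0 n (x : 'cV[C]_n) : 0 <= qform 1%:M x.
Proof. by rewrite qform1E sumr_ge0 // => i _; rewrite exprn_ge0. Qed.

Lemma qform1_eq0 n (x : 'cV[C]_n) : qform 1%:M x = 0 -> x = 0.
Proof.
rewrite qform1E => /(psumr_eq0P (fun i _ => exprn_ge0 2 (normr_ge0 (x i 0)))) x0.
by apply/matrixP=> i j; rewrite ord1 mxE; apply/eqP; rewrite -normr_eq0 -sqrf_eq0 x0.
Qed.

Lemma qform_gram m n (S : 'M[C]_(m, n)) x :
  qform (adjmx S *m S) x = qform 1%:M (S *m x).
Proof. by rewrite -qform_mulmx mulmx1. Qed.

Lemma qform_diag n (d : 'rV[C]_n) x :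
  qform (diag_mx d) x = \sum_i d 0 i * `|x i 0| ^+ 2.
Proof.
rewrite /qform mul_mx_diag mxE; apply: eq_bigr => i _.
by rewrite !mxE normCKC mulrAC mulrC.
Qed.

Lemma qform_diag_ge n (d : 'rV[C]_n) j x :
  (forall i, d 0 j <= d 0 i) -> d 0 j * qform 1%:M x <= qform (diag_mx d) x.
Proof.
move=> dmin; rewrite qform1E qform_diag mulr_sumr; apply: ler_sum => i _.
by apply: ler_wpM2r; rewrite ?exprn_ge0.
Qed.

Lemma dim_gt0_qform n (A : 'M[C]_n) x : qform A x != 0 -> (0 < n)%N.
Proof. by case: n A x => // A x; rewrite /qform mxE big_ord0 eqxx. Qed.

Lemma psd1 n : psd (1%:M : 'M[C]_n).
Proof. by split; [exact: adjmx1 | exact: qform1_ge0]. Qed.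

Lemma psd_conj m n (A : 'M[C]_m) (P : 'M[C]_(m, n)) :
  psd A -> psd (adjmx P *m A *m P).
Proof.
case=> hA A_ge0; split=> [|x]; last by rewrite qform_mulmx.
by rewrite /Defs.hermitian !adjmxM adjmxK hA mulmxA.
Qed.

Lemma psd_rank1 n (x : 'cV[C]_n) : psd (x *m adjmx x).
Proof. by have := psd_conj (adjmx x) (psd1 1); rewrite adjmxK mulmx1. Qed.

Lemma psdD n (A B : 'M[C]_n) : psd A -> psd B -> psd (A + B).
Proof.
case=> hA A_ge0 [hB B_ge0]; split=> [|x]; first by rewrite /Defs.hermitian adjmxD hA hB.
by rewrite qformD addr_ge0.
Qed.

Lemma trace_rank1 n (B : 'M[C]_n) x : \tr (B *m (x *m adjmx x)) = qform B x.
Proof. by rewrite mulmxA mxtrace_mulC mulmxA trace_mx11. Qed.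

Lemma trace_gram m n (B : 'M[C]_n) (S : 'M[C]_(m, n)) :
  \tr (B *m (adjmx S *m S)) = \sum_i qform B (adjmx (row i S)).
Proof.
rewrite mulmxA mxtrace_mulC mulmxA; apply: eq_bigr => i _.
by rewrite /qform adjmxK -row_mul !mxE; apply: eq_bigr => k _; rewrite !mxE.
Qed.

End QuadraticForms.

Section Spectral.
Variable C : numClosedFieldType.

Lemma spectral_hermitian n (A : 'M[C]_n) : Defs.hermitian A ->
  exists (U : 'M_n) (d : 'rV_n), [/\ U *m adjmx U = 1%:M, adjmx U *m U = 1%:M,
    A = adjmx U *m diag_mx d *m U &
    forall i, d 0 i = qform A (adjmx U *m delta_mx i 0)].
Proof.
move=> hA; set U := spectralmx A; set d := spectral_diag A.
have unitU : U \is unitarymx := spectral_unitarymx A.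
have UU : U *m adjmx U = 1%:M by rewrite adjmx_trC; apply/unitarymxP.
have normalA : A \is normalmx by apply/normalmxP; rewrite -adjmx_trC hA.
have Adec : A = adjmx U *m diag_mx d *m U.
  by rewrite {1}(orthomx_spectralP normalA) invmx_unitary // adjmx_trC.
exists U, d; split=> //; first exact: mulmx1C.
move=> i; rewrite -qform_mulmx adjmxK Adec !mulmxA UU mul1mx -mulmxA UU mulmx1.
by rewrite qform_delta mxE eqxx mulr1n.
Qed.

Lemma rayleigh n (M : 'M[C]_n) : Defs.hermitian M -> (0 < n)%N ->
  exists z mu, [/\ qform 1%:M z = 1, M *m z = mu *: z &
    forall w, mu * qform 1%:M w <= qform M w].
Proof.
move=> hM n_gt0; have [U [d [UU' U'U Mdec dE]]] := spectral_hermitian hM.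
have [j dmin] : exists j, forall i, d 0 j <= d 0 i.
  by apply: (real_argmin (Ordinal n_gt0)) => i; rewrite dE qform_real.
have De : diag_mx d *m delta_mx j 0 = d 0 j *: delta_mx j 0 :> 'cV_n.
  apply/matrixP=> a b; rewrite mul_diag_mx !mxE.
  by case: (eqVneq a j) => [->|]; rewrite ?mulr0.
exists (adjmx U *m delta_mx j 0), (d 0 j); split.
- by rewrite -qform_mulmx adjmxK mulmx1 UU' qform_delta mxE eqxx.
- by rewrite Mdec !mulmxA -(mulmxA _ U) UU' mulmx1 -mulmxA De scalemxAr.
move=> w; have -> : qform 1%:M w = qform 1%:M (U *m w).
  by rewrite -qform_mulmx mulmx1 U'U.
by rewrite Mdec qform_mulmx; apply: qform_diag_ge.
Qed.

End Spectral.

Section NonnegativeDiagonal.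
Variables (C : numClosedFieldType) (n : nat) (d : 'rV[C]_n).
Hypothesis d_ge0 : forall i, 0 <= d 0 i.

(* [T] is the pseudo-inverse of [S = sqrt D] because [0^-1 = 0]; hence [Z]
   is the orthogonal projection onto [ker D]. *)
Let S := diag_mx (map_mx sqrtC d).
Let T := diag_mx (map_mx (fun t => (sqrtC t)^-1) d).
Let Z := 1%:M - S *m T.

Let adjS : adjmx S = S.
Proof.
rewrite /S adjmx_diag; congr diag_mx; apply/matrixP=> i j.
by rewrite ord1 !mxE geC0_conj // sqrtC_ge0.
Qed.

Let adjT : adjmx T = T.
Proof.
rewrite /T adjmx_diag; congr diag_mx; apply/matrixP=> i j.
by rewrite ord1 !mxE geC0_conj // invr_ge0 sqrtC_ge0.
Qed.

Let TS : T *m S = S *m T. Proof. exact: diag_mxC. Qed.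

Let diagS : diag_mx d = adjmx S *m S.
Proof.
rewrite adjS /S diag_mxM; congr diag_mx; apply/matrixP=> i j.
by rewrite ord1 !mxE -expr2 sqrtCK.
Qed.

Let STS : S *m T *m S = S.
Proof.
rewrite /S /T !diag_mxM; congr diag_mx; apply/matrixP=> i j; rewrite ord1 !mxE.
by have [->|s0] := eqVneq (sqrtC (d 0 j)) 0; rewrite ?mul0r ?mulfV ?mul1r.
Qed.

Let TST : T *m S *m T = T.
Proof.
rewrite /S /T !diag_mxM; congr diag_mx; apply/matrixP=> i j; rewrite ord1 !mxE.
by have [->|s0] := eqVneq (sqrtC (d 0 j)) 0; rewrite ?invr0 ?mul0r ?mulVf ?mul1r.
Qed.

Let hermZ : Defs.hermitian Z.
Proof. by rewrite /Defs.hermitian adjmxB adjmx1 adjmxM adjS adjT TS. Qed.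

Let ZS : Z *m S = 0. Proof. by rewrite mulmxBl mul1mx STS subrr. Qed.

Let ZT : Z *m T = 0. Proof. by rewrite mulmxBl mul1mx -TS TST subrr. Qed.

Let ZZ : Z *m Z = Z. Proof. by rewrite {2}/Z mulmxBr mulmx1 mulmxA ZS mul0mx subr0. Qed.

Let DZ : diag_mx d *m Z = 0.
Proof.
by rewrite diagS adjS -mulmxA mulmxBr mulmx1 -TS mulmxA STS subrr mulmx0.
Qed.

Let TDT : adjmx T *m diag_mx d *m T = 1%:M - Z.
Proof. by rewrite adjT diagS adjS mulmxA TS STS /Z subKr. Qed.

Let TS_Z (y : 'cV[C]_n) : T *m (S *m y) = y - Z *m y.
Proof. by rewrite mulmxA TS /Z mulmxBl mul1mx subKr. Qed.

Lemma diag_psd_gram : exists R : 'M[C]_n, diag_mx d = adjmx R *m R.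
Proof. by exists S. Qed.

Lemma diag_ker_proj : exists P : 'M[C]_n,
  [/\ Defs.hermitian P, diag_mx d *m P = 0 &
      forall x : 'cV_n, diag_mx d *m x = 0 -> P *m x = x].
Proof.
exists Z; split=> // x Dx.
have : qform 1%:M (S *m x) = 0 by rewrite -qform_gram -diagS qform_ker.
by move=> /qform1_eq0 Sx; rewrite /Z mulmxBl mul1mx -TS -mulmxA Sx mulmx0 subr0.
Qed.

Lemma gen_rayleigh_diag (B : 'M[C]_n) y0 :
  Defs.hermitian B -> (forall x : 'cV_n, diag_mx d *m x = 0 -> B *m x = 0) ->
  qform (diag_mx d) y0 = 1 ->
  exists2 x, qform (diag_mx d) x = 1 &
    forall y, qform (diag_mx d) y = 1 -> qform B x <= qform B y.
Proof.
(* The penalty [c *: Z], with [c] above the value at a feasible point, forces a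
   least eigenvector of [M] into the range of [S]. *)
move=> hB kerB Dy0; pose c := qform B y0 + 1.
pose M0 := adjmx T *m B *m T; pose M := M0 + c *: Z.
have hM : Defs.hermitian M.
  rewrite /Defs.hermitian adjmxD adjmxZ hermZ !adjmxM adjmxK hB mulmxA.
  by rewrite conj_Creal // rpredD ?rpred1 ?qform_real.
have whiten y : qform (diag_mx d) y = 1 ->
    [/\ qform 1%:M (S *m y) = 1, Z *m (S *m y) = 0 & qform M (S *m y) = qform B y].
  move=> Dy; have ZSy : Z *m (S *m y) = 0 by rewrite mulmxA ZS mul0mx.
  split=> //; first by rewrite -qform_gram -diagS.
  rewrite qformD qformZl (qform_ker ZSy) mulr0 addr0 qform_mulmx TS_Z.
  by rewrite qform_sub_ker // kerB // mulmxA DZ mul0mx.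
have n_gt0 : (0 < n)%N.
  by apply: (@dim_gt0_qform _ _ (diag_mx d) y0); rewrite Dy0 oner_neq0.
have [z [mu [z1 Mz mu_min]]] := rayleigh hM n_gt0.
have mu_neq_c : c != mu.
  apply/eqP=> c_mu; have := mu_min (S *m y0); have [-> _ ->] := whiten y0 Dy0.
  by rewrite -c_mu mulr1 gerDl ler10.
have Zz : Z *m z = 0.
  have ZM : Z *m M = c *: Z.
    by rewrite mulmxDr !mulmxA adjT ZT !mul0mx add0r -scalemxAr ZZ.
  have : (c - mu) *: (Z *m z) = 0.
    by rewrite scalerBl scalemxAl -ZM -mulmxA Mz -scalemxAr subrr.
  by move/eqP; rewrite scaler_eq0 subr_eq0 (negPf mu_neq_c) => /eqP.
exists (T *m z).
  by rewrite -qform_mulmx TDT qformB z1 (qform_ker Zz) subr0.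
move=> y Dy; have [Sy1 _ <-] := whiten y Dy; apply: le_trans (mu_min _).
rewrite Sy1 mulr1 -qform_mulmx -/M0.
have -> : M0 = M - c *: Z by rewrite addrK.
by rewrite qformB qformZl (qform_ker Zz) mulr0 subr0 (qform_eigen Mz) z1 mulr1.
Qed.

End NonnegativeDiagonal.

Section PositiveSemidefinite.
Variables (C : numClosedFieldType) (n : nat).
Implicit Types (A B : 'M[C]_n) (x y : 'cV[C]_n).

Lemma psd_gram A : psd A -> exists S : 'M[C]_n, A = adjmx S *m S.
Proof.
case=> hA A_ge0; have [U [d [_ _ Adec dE]]] := spectral_hermitian hA.
have d_ge0 i : 0 <= d 0 i by rewrite dE.
have [S dS] := diag_psd_gram d_ge0.
by exists (S *m U); rewrite Adec dS adjmxM !mulmxA.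
Qed.

Lemma psd_ker A x : psd A -> qform A x = 0 -> A *m x = 0.
Proof.
move=> /psd_gram [S ->]; rewrite qform_gram => /qform1_eq0 Sx.
by rewrite -mulmxA Sx mulmx0.
Qed.

Lemma psdD_ker A B x : psd A -> psd B -> (A + B) *m x = 0 ->
  A *m x = 0 /\ B *m x = 0.
Proof.
move=> psdA psdB /qform_ker; rewrite qformD => /eqP.
rewrite paddr_eq0 ?psdA.2 ?psdB.2 // => /andP[/eqP Ax /eqP Bx].
by split; apply: psd_ker.
Qed.

Lemma loewner_ker A B x : psd B -> loewner B A -> A *m x = 0 -> B *m x = 0.
Proof.
move=> psdB [_ AB_ge0] Ax; apply: psd_ker => //; apply/le_anti.
by have := AB_ge0 x; rewrite qformB (qform_ker Ax) sub0r oppr_ge0 psdB.2 => ->.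
Qed.

Lemma psd_ker_proj A : psd A -> exists P : 'M[C]_n,
  [/\ Defs.hermitian P, A *m P = 0 & forall x, A *m x = 0 -> P *m x = x].
Proof.
case=> hA A_ge0; have [U [d [UU' U'U Adec dE]]] := spectral_hermitian hA.
have d_ge0 i : 0 <= d 0 i by rewrite dE.
have [Z [hZ DZ Zfix]] := diag_ker_proj d_ge0.
exists (adjmx U *m Z *m U); split.
- by rewrite /Defs.hermitian !adjmxM adjmxK hZ mulmxA.
- by rewrite Adec !mulmxA -(mulmxA _ U) UU' mulmx1 -(mulmxA _ _ Z) DZ mulmx0 mul0mx.
move=> x Ax; have UA : U *m A = diag_mx d *m U by rewrite Adec !mulmxA UU' mul1mx.
have DUx : diag_mx d *m (U *m x) = 0 by rewrite mulmxA -UA -mulmxA Ax mulmx0.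
by rewrite -!mulmxA Zfix // mulmxA U'U mul1mx.
Qed.

Lemma gen_rayleigh A B y0 : psd A -> Defs.hermitian B ->
  (forall x, A *m x = 0 -> B *m x = 0) -> qform A y0 = 1 ->
  exists2 x, qform A x = 1 & forall y, qform A y = 1 -> qform B x <= qform B y.
Proof.
case=> hA A_ge0 hB kerB Ay0.
have [U [d [UU' U'U Adec dE]]] := spectral_hermitian hA.
have d_ge0 i : 0 <= d 0 i by rewrite dE.
have qA y : qform A y = qform (diag_mx d) (U *m y) by rewrite Adec qform_mulmx.
pose B' := adjmx (adjmx U) *m B *m adjmx U.
have qB y : qform B y = qform B' (U *m y) by rewrite /B' qform_mulmx mulmxA U'U mul1mx.
have hB' : Defs.hermitian B' by rewrite /Defs.hermitian /B' !adjmxM adjmxK hB mulmxA.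
have kerB' x : diag_mx d *m x = 0 -> B' *m x = 0.
  move=> Dx; have : A *m (adjmx U *m x) = 0.
    by rewrite Adec -!mulmxA (mulmxA U) UU' mul1mx Dx mulmx0.
  by move/kerB; rewrite /B' -!mulmxA => ->; rewrite mulmx0.
have DUy0 : qform (diag_mx d) (U *m y0) = 1 by rewrite -qA.
have [x Dx xmin] := gen_rayleigh_diag d_ge0 hB' kerB' DUy0.
exists (adjmx U *m x); first by rewrite qA mulmxA UU' mul1mx.
by move=> y Ay; rewrite !qB mulmxA UU' mul1mx; apply: xmin; rewrite -qA.
Qed.

End PositiveSemidefinite.

Section Relaxation.
Variables (C : numClosedFieldType) (n : nat) (F G H : 'M[C]_n).
Hypotheses (psdF : psd F) (psdG : psd G) (psdH : psd H).
Hypothesis kerFH : forall x : 'cV[C]_n, F *m x = 0 -> H *m x = 0.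

Lemma qp_feasible_normalize y : G *m y = 0 -> qform F y != 0 ->
  exists2 x, qp_feasible F G x & qform H x = (qform F y)^-1 * qform H y.
Proof.
move=> Gy Fy; have [Q [hQ FGQ Qfix]] := psd_ker_proj (psdD psdF psdG).
have [FQy GQy] : F *m (Q *m y) = 0 /\ G *m (Q *m y) = 0.
  by apply: psdD_ker => //; rewrite mulmxA FGQ mul0mx.
set c := qform F y; have c_ge0 : 0 <= c := psdF.2 y.
have aa : ((sqrtC c)^-1)^* * (sqrtC c)^-1 = c^-1.
  by rewrite geC0_conj ?invr_ge0 ?sqrtC_ge0 // -invfM -expr2 sqrtCK.
exists ((sqrtC c)^-1 *: (y - Q *m y)).
  split; [|split].
  - by rewrite qformZ qform_sub_ker ?aa ?mulVf //; apply: psdF.1.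
  - by rewrite /in_ker -scalemxAr mulmxBr Gy GQy subrr scaler0.
  move=> k Fk Gk; have Qk : Q *m k = k by apply: Qfix; rewrite mulmxDl Fk Gk addr0.
  by rewrite -scalemxAr mulmxBr mulmxA -hQ -adjmxM Qk subrr scaler0 mxE.
by rewrite qformZ qform_sub_ker ?aa //; [apply: psdH.1 | apply: kerFH].
Qed.

Lemma qp_optimal_le_ker x y : qp_optimal F G H x -> G *m y = 0 ->
  qform H x * qform F y <= qform H y.
Proof.
move=> [_ xmin] Gy; have [Fy0|Fy] := eqVneq (qform F y) 0.
  by rewrite Fy0 mulr0 psdH.2.
have [x' x'feas Hx'] := qp_feasible_normalize Gy Fy.
have Fy_gt0 : 0 < qform F y by rewrite lt_def Fy psdF.2.
by rewrite -ler_pdivlMr // mulrC -Hx'; apply: xmin.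
Qed.

Lemma sdp_feasible_decomp X : sdp_feasible F G X ->
  exists s : 'I_n -> 'cV[C]_n, [/\ forall i, G *m s i = 0,
    \sum_i qform F (s i) = 1 & forall B, \tr (B *m X) = \sum_i qform B (s i)].
Proof.
case=> /psd_gram [S ->] [trF trG]; exists (fun i => adjmx (row i S)).
move: trF trG; rewrite !trace_gram => trF trG; split=> // [i|B]; last exact: trace_gram.
by apply: psd_ker => //; exact: (psumr_eq0P (fun j _ => psdG.2 _) trG isT).
Qed.

Lemma qp_feasible_exists : (exists X, sdp_feasible F G X) -> exists x, qp_feasible F G x.
Proof.
case=> X /sdp_feasible_decomp [s [Gs sF1 _]].
have sF_neq0 : \sum_i qform F (s i) <> 0 by rewrite sF1; apply/eqP/oner_neq0.
have [i /andP[_ Fi_gt0]] := psumr_neq0P (fun i _ => psdF.2 (s i)) sF_neq0.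
have Fi : qform F (s i) != 0 by rewrite gt_eqF.
by have [x xfeas _] := qp_feasible_normalize (Gs i) Fi; exists x.
Qed.

Lemma qp_optimal_exists : (exists x, qp_feasible F G x) -> exists x, qp_optimal F G H x.
Proof.
case=> x0 [Fx0 [Gx0 _]]; have [P [_ GP Pfix]] := psd_ker_proj psdG.
pose F1 := adjmx P *m F *m P; pose H1 := adjmx P *m H *m P.
have kerF1 (x : 'cV_n) : F1 *m x = 0 -> H1 *m x = 0.
  move=> F1x; have : F *m (P *m x) = 0.
    by apply: psd_ker => //; rewrite -qform_mulmx qform_ker.
  by move/kerFH; rewrite /H1 -!mulmxA => ->; rewrite mulmx0.
have F1x0 : qform F1 x0 = 1 by rewrite qform_mulmx Pfix.
have [x F1x xmin] := gen_rayleigh (psd_conj P psdF) (psd_conj P psdH).1 kerF1 F1x0.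
have GPx : G *m (P *m x) = 0 by rewrite mulmxA GP mul0mx.
have [|x' x'feas Hx'] := qp_feasible_normalize GPx; first by rewrite -qform_mulmx F1x oner_neq0.
exists x'; split=> // y [Fy [Gy _]].
rewrite Hx' -!qform_mulmx F1x invr1 mul1r -(Pfix y Gy) -qform_mulmx; apply: xmin.
by rewrite qform_mulmx Pfix.
Qed.

Lemma qp_optimal_le_sdp x Y : qp_optimal F G H x -> sdp_feasible F G Y ->
  qform H x <= \tr (H *m Y).
Proof.
move=> xopt /sdp_feasible_decomp [s [Gs sF1 trY]].
rewrite trY -[qform H x]mulr1 -sF1 mulr_sumr; apply: ler_sum => i _.
exact: qp_optimal_le_ker.
Qed.

Lemma sdp_optimal_rank1 x : qp_optimal F G H x -> sdp_optimal F G H (x *m adjmx x).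
Proof.
move=> xopt; have [[Fx [Gx _]] _] := xopt; split.
  by split; [exact: psd_rank1 | rewrite !trace_rank1 Fx qform_ker].
by move=> Y Yfeas; rewrite trace_rank1; apply: qp_optimal_le_sdp.
Qed.

End Relaxation.

Theorem proposition1 (R : realType) (N : nat) (F G H : 'M[R[i]]_N) :
  psd F -> psd G -> psd H -> loewner 0 H -> loewner H F ->
  (exists X, sdp_feasible F G X) ->
  [/\ (exists X, sdp_optimal F G H X),
      (exists x, qp_optimal F G H x),
      (forall X x, sdp_optimal F G H X -> qp_optimal F G H x ->
                   \tr (H *m X) = qform H x) &
      (forall x, qp_optimal F G H x -> sdp_optimal F G H (x *m adjmx x))].
Proof.
(* [loewner 0 H] is already implied by [psd H]. *)
move=> psdF psdG psdH _ HF feas.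
have kerFH (x : 'cV_N) : F *m x = 0 -> H *m x = 0 := loewner_ker psdH HF.
have rank1_opt := sdp_optimal_rank1 psdF psdG psdH kerFH.
have [x xopt] := qp_optimal_exists psdF psdG psdH kerFH
  (qp_feasible_exists psdF psdG psdH kerFH feas).
split; [by exists (x *m adjmx x); apply: rank1_opt | by exists x | | exact: rank1_opt].
move=> X y [Xfeas Xmin] yopt; apply/le_anti.
rewrite (qp_optimal_le_sdp psdF psdG psdH kerFH yopt Xfeas) andbT -trace_rank1.
by apply: Xmin; case: (rank1_opt y yopt).
Qed.
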